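(* The variety $\mathsf{V}(S_{(4,431)})$ is the ai-semiring variety defined by the identities $x^2y\approx xy$, $xy\approx yx$, $x^2\approx x^2+x$, $x+yz\approx x+yz+xyz$.
   Context: An ai-semiring is an algebra $(S,+,\cdot)$ with $(S,+)$ a semilattice, $(S,\cdot)$ a semigroup, and both distributive laws. $\mathsf{V}(S)$ is the variety generated by $S$; ''the ai-semiring variety defined by identities $\Sigma$'' is the class of all ai-semirings satisfying $\Sigma$. $S_{(4,431)}$ has carrier $\{1,2,3,4\}$; addition: $x+x=x$, $2+x=x$, $1+x=1$ for all $x$, $3+4=1$; multiplication (row $a$, column $b$ gives $a\cdot b$): row $1$: $1,2,1,1$; row $2$: $2,2,2,2$; row $3$: $1,2,1,1$; row $4$: $1,2,1,4$. *)

Record aiSemiring := AiSemiring {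
  carrier :> Type;
  sadd : carrier -> carrier -> carrier;
  smul : carrier -> carrier -> carrier;
  saddA : forall x y z, sadd x (sadd y z) = sadd (sadd x y) z;
  saddC : forall x y, sadd x y = sadd y x;
  saddxx : forall x, sadd x x = x;
  smulA : forall x y z, smul x (smul y z) = smul (smul x y) z;
  smulDl : forall x y z, smul (sadd x y) z = sadd (smul x z) (smul y z);
  smulDr : forall x y z, smul x (sadd y z) = sadd (smul x y) (smul x z)
}.

Arguments sadd {a} _ _.
Arguments smul {a} _ _.

Inductive el4 : Type := e1 | e2 | e3 | e4.

Definition add4 (a b : el4) : el4 :=
  match a, b with
  | e2, x => x
  | x, e2 => x
  | e1, _ => e1
  | _, e1 => e1
  | e3, e3 => e3
  | e4, e4 => e4
  | e3, e4 => e1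
  | e4, e3 => e1
  end.

Definition mul4 (a b : el4) : el4 :=
  match a, b with
  | e2, _ => e2
  | _, e2 => e2
  | e4, e4 => e4
  | _, _ => e1
  end.

Lemma add4A : forall x y z, add4 x (add4 y z) = add4 (add4 x y) z.
Proof. intros [] [] []; reflexivity. Qed.
Lemma add4C : forall x y, add4 x y = add4 y x.
Proof. intros [] []; reflexivity. Qed.
Lemma add4xx : forall x, add4 x x = x.
Proof. intros []; reflexivity. Qed.
Lemma mul4A : forall x y z, mul4 x (mul4 y z) = mul4 (mul4 x y) z.
Proof. intros [] [] []; reflexivity. Qed.
Lemma mul4Dl : forall x y z, mul4 (add4 x y) z = add4 (mul4 x z) (mul4 y z).
Proof. intros [] [] []; reflexivity. Qed.
Lemma mul4Dr : forall x y z, mul4 x (add4 y z) = add4 (mul4 x y) (mul4 x z).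
Proof. intros [] [] []; reflexivity. Qed.

Definition S4_431 : aiSemiring :=
  AiSemiring el4 add4 mul4 add4A add4C add4xx mul4A mul4Dl mul4Dr.

Definition is_hom {A B : aiSemiring} (f : A -> B) : Prop :=
  (forall x y, f (sadd x y) = sadd (f x) (f y)) /\
  (forall x y, f (smul x y) = smul (f x) (f y)).

(** Direct power S^I with pointwise operations: a subset P of I -> S closed
    under the pointwise operations is (the carrier of) a subalgebra. *)
Definition pw_closed {S : aiSemiring} {I : Type} (P : (I -> S) -> Prop) : Prop :=
  (forall u v, P u -> P v -> P (fun i => sadd (u i) (v i))) /\
  (forall u v, P u -> P v -> P (fun i => smul (u i) (v i))).

(** A belongs to V(S) = HSP(S): A is a homomorphic image of a subalgebra
    of a direct power of S.  [h] is a surjective map from the subalgebra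
    carrier {u | P u} onto A preserving the (pointwise) operations. *)
Definition in_variety_gen (S A : aiSemiring) : Prop :=
  exists (I : Type) (P : (I -> S) -> Prop) (h : {u : I -> S | P u} -> A),
    pw_closed P /\
    (forall u v w : {u : I -> S | P u},
        (forall i, proj1_sig w i = sadd (proj1_sig u i) (proj1_sig v i)) ->
        h w = sadd (h u) (h v)) /\
    (forall u v w : {u : I -> S | P u},
        (forall i, proj1_sig w i = smul (proj1_sig u i) (proj1_sig v i)) ->
        h w = smul (h u) (h v)) /\
    (forall a : A, exists u, h u = a).

Definition satisfies_Sigma (A : aiSemiring) : Prop :=
  (forall x y : A, smul (smul x x) y = smul x y) /\
  (forall x y : A, smul x y = smul y x) /\
  (forall x : A, smul x x = sadd (smul x x) x) /\
  (forall x y z : A,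
      sadd x (smul y z) = sadd (sadd x (smul y z)) (smul (smul x y) z)).

From Stdlib Require Import List Classical ClassicalEpsilon.
Import ListNotations.

(* Identities pass to subalgebras of powers and to homomorphic images, which gives
   one direction.  Conversely, for a model A of the four identities it suffices that
   every identity of S_(4,431) holds in A: then the term functions on the power
   S^(A -> S) form a subalgebra that maps onto A.  Every term is a finite sum of
   words, so we show that a word q lies below a term t in A whenever it does in
   S_(4,431).  Valuations vanishing off the letters of q (with [e2] as zero) detect
   in t a word in the single letter a when q = a, and otherwise a word of length at
   least two and, for each letter x of q, a word containing x, all using only
   letters of q.  In A we have x <= x^k, words of length at least two depend only on
   their letters, and x + yz = x + yz + xyz lets us multiply such words while
   staying below t; together they yield a word with exactly the letters of q below
   t, which equals q. *)

Section SemilatticeOrder.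
Context {B : aiSemiring}.
Implicit Types x y z s : B.

Definition sle x y : Prop := sadd x y = y.

Lemma sle_refl x : sle x x.
Proof. apply saddxx. Qed.

Lemma sle_trans x y z : sle x y -> sle y z -> sle x z.
Proof. unfold sle; intros Hxy Hyz. rewrite <- Hyz, saddA, Hxy; reflexivity. Qed.

Lemma sle_antisym x y : sle x y -> sle y x -> x = y.
Proof. unfold sle; intros Hxy Hyx. rewrite <- Hxy, saddC; symmetry; exact Hyx. Qed.

Lemma sle_addl x y : sle x (sadd x y).
Proof. unfold sle. rewrite saddA, saddxx; reflexivity. Qed.

Lemma sle_addr x y : sle y (sadd x y).
Proof. rewrite saddC. apply sle_addl. Qed.

Lemma sle_add x y s : sle x s -> sle y s -> sle (sadd x y) s.
Proof. unfold sle; intros Hx Hy. rewrite <- saddA, Hy, Hx; reflexivity. Qed.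

Lemma sle_mulr x y z : sle x y -> sle (smul x z) (smul y z).
Proof. unfold sle; intros Hxy. rewrite <- smulDl, Hxy; reflexivity. Qed.

End SemilatticeOrder.

Section FiniteSums.
Context {B : aiSemiring}.

Inductive sums : list B -> B -> Prop :=
| sums_one x : sums [x] x
| sums_cons x xs s : sums xs s -> sums (x :: xs) (sadd x s).

Lemma sums_app xs ys s t : sums xs s -> sums ys t -> sums (xs ++ ys) (sadd s t).
Proof.
  intros Hxs Hys. induction Hxs as [x|x xs s _ IH]; simpl.
  - constructor; exact Hys.
  - rewrite <- saddA. constructor; exact IH.
Qed.

Lemma sums_mull a xs s : sums xs s -> sums (map (smul a) xs) (smul a s).
Proof.
  induction 1; simpl; [constructor|]. rewrite smulDr. constructor; assumption.
Qed.

Lemma sums_mul xs ys s t :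
  sums xs s -> sums ys t -> sums (flat_map (fun x => map (smul x) ys) xs) (smul s t).
Proof.
  intros Hxs Hys. induction Hxs as [x|x xs s _ IH]; simpl.
  - rewrite app_nil_r. apply sums_mull; exact Hys.
  - rewrite smulDl. apply sums_app; [apply sums_mull|]; assumption.
Qed.

Lemma sums_closed (Q : B -> Prop) xs s :
  (forall x y, Q x -> Q y -> Q (sadd x y)) ->
  sums xs s -> (forall x, In x xs -> Q x) -> Q s.
Proof.
  intros HQ. induction 1 as [x|x xs s _ IH]; intros Hall.
  - apply Hall; left; reflexivity.
  - apply HQ; [apply Hall; left; reflexivity|].
    apply IH; intros y Hy; apply Hall; right; exact Hy.
Qed.

Lemma sums_upper xs s x : sums xs s -> In x xs -> sle x s.
Proof.
  induction 1 as [y|y xs s _ IH]; intros Hx.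
  - destruct Hx as [<-|[]]. apply sle_refl.
  - destruct Hx as [<-|Hx]; [apply sle_addl|].
    apply (sle_trans _ s); [exact (IH Hx) | apply sle_addr].
Qed.

End FiniteSums.

Inductive term (X : Type) : Type :=
| Var : X -> term X
| Add : term X -> term X -> term X
| Mul : term X -> term X -> term X.
Arguments Var {X}.
Arguments Add {X}.
Arguments Mul {X}.

Fixpoint ev {B : aiSemiring} {X : Type} (f : X -> B) (t : term X) : B :=
  match t with
  | Var x => f x
  | Add t u => sadd (ev f t) (ev f u)
  | Mul t u => smul (ev f t) (ev f u)
  end.

(* A nonempty word [a :: l] is stored as the pair [(a, l)]. *)
Definition word (X : Type) : Type := (X * list X)%type.

Section Words.
Context {X : Type}.
Implicit Types (w : word X) (t : term X).

Definition letters w : list X := fst w :: snd w.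

Definition wcat w w' : word X := (fst w, snd w ++ letters w').

Lemma letters_wcat w w' : letters (wcat w w') = letters w ++ letters w'.
Proof. reflexivity. Qed.

Fixpoint monomials t : list (word X) :=
  match t with
  | Var x => [(x, [])]
  | Add t u => monomials t ++ monomials u
  | Mul t u => flat_map (fun w => map (wcat w) (monomials u)) (monomials t)
  end.

Context {B : aiSemiring} (f : X -> B).

Fixpoint wprod (a : X) (l : list X) : B :=
  match l with
  | [] => f a
  | b :: l' => smul (f a) (wprod b l')
  end.

Definition wval w : B := wprod (fst w) (snd w).

Lemma wprod_app a l b l' : wprod a (l ++ b :: l') = smul (wprod a l) (wprod b l').
Proof.
  revert a. induction l as [|c l IH]; intros a; simpl; [reflexivity|].
  rewrite IH, smulA; reflexivity.
Qed.

Lemma wval_wcat w w' : wval (wcat w w') = smul (wval w) (wval w').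
Proof. apply wprod_app. Qed.

Lemma map_wval_wcat ws ws' :
  map wval (flat_map (fun w => map (wcat w) ws') ws) =
  flat_map (fun x => map (smul x) (map wval ws')) (map wval ws).
Proof.
  induction ws as [|w ws IH]; simpl; [reflexivity|].
  rewrite map_app, IH, !map_map. f_equal.
  apply map_ext; intros w'; apply wval_wcat.
Qed.

Lemma sums_monomials t : sums (map wval (monomials t)) (ev f t).
Proof.
  induction t as [x|t IHt u IHu|t IHt u IHu]; simpl.
  - constructor.
  - rewrite map_app. apply sums_app; assumption.
  - rewrite map_wval_wcat. apply sums_mul; assumption.
Qed.

Lemma wval_le_ev t w : In w (monomials t) -> sle (wval w) (ev f t).
Proof. intros Hw. apply (sums_upper _ _ _ (sums_monomials t)), in_map, Hw. Qed.

Lemma ev_closed (Q : B -> Prop) t :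
  (forall x y, Q x -> Q y -> Q (sadd x y)) ->
  (forall w, In w (monomials t) -> Q (wval w)) -> Q (ev f t).
Proof.
  intros HQ H. apply (sums_closed Q _ _ HQ (sums_monomials t)).
  intros x Hx. apply in_map_iff in Hx as [w [<- Hw]]. apply H, Hw.
Qed.

Lemma ev_le_of_monomials t s :
  (forall w, In w (monomials t) -> sle (wval w) s) -> sle (ev f t) s.
Proof. apply (ev_closed (fun x => sle x s)). intros x y; apply sle_add. Qed.

End Words.

Section SigmaConsequences.
Context {A : aiSemiring} (HS : satisfies_Sigma A).

Let mul_sq_l : forall x y : A, smul (smul x x) y = smul x y := proj1 HS.
Let mulC : forall x y : A, smul x y = smul y x := proj1 (proj2 HS).
Let sq_add : forall x : A, smul x x = sadd (smul x x) x := proj1 (proj2 (proj2 HS)).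
Let add_mul_absorb : forall x y z : A,
  sadd x (smul y z) = sadd (sadd x (smul y z)) (smul (smul x y) z) :=
  proj2 (proj2 (proj2 HS)).

Lemma sle_sq (x : A) : sle x (smul x x).
Proof. unfold sle. rewrite saddC, <- sq_add. reflexivity. Qed.

(* Instance [x := s] of the fourth identity: [y z <= s] implies [s y z <= s]. *)
Lemma sle_mul_prod (p y z s : A) :
  sle p s -> sle (smul y z) s -> sle (smul p (smul y z)) s.
Proof.
  intros Hp Hyz.
  assert (Hs : sle (smul (smul s y) z) s).
  { unfold sle in *. rewrite saddC in Hyz.
    pose proof (add_mul_absorb s y z) as E. rewrite Hyz in E.
    rewrite saddC. symmetry; exact E. }
  rewrite smulA. apply (sle_trans _ _ _ (sle_mulr _ _ _ (sle_mulr _ _ _ Hp)) Hs).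
Qed.

Context {X : Type} (f : X -> A).

Lemma wprod_mul_letter a l x :
  l <> [] -> In x (a :: l) -> smul (wprod f a l) (f x) = wprod f a l.
Proof.
  revert a. induction l as [|b l IH]; intros a Hl Hx; [congruence|]. simpl.
  destruct Hx as [<-|Hx].
  - rewrite <- smulA, (mulC (wprod f b l)), smulA, mul_sq_l. reflexivity.
  - destruct l as [|c l].
    + destruct Hx as [<-|[]]. simpl.
      rewrite <- smulA, mulC, mul_sq_l, mulC. reflexivity.
    + rewrite <- smulA, (IH b); [reflexivity|congruence|exact Hx].
Qed.

Lemma wprod_mul_sub a l b l' :
  l <> [] -> incl (b :: l') (a :: l) -> smul (wprod f a l) (wprod f b l') = wprod f a l.
Proof.
  revert b. induction l' as [|c l' IH]; intros b Hl Hincl; simpl.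
  - apply wprod_mul_letter; [exact Hl | apply Hincl; left; reflexivity].
  - rewrite smulA, (wprod_mul_letter a l b Hl (Hincl b (or_introl eq_refl))).
    apply IH; [exact Hl | intros y Hy; apply Hincl; right; exact Hy].
Qed.

Lemma wprod_content a l b l' :
  l <> [] -> l' <> [] -> incl (b :: l') (a :: l) -> incl (a :: l) (b :: l') ->
  wprod f a l = wprod f b l'.
Proof.
  intros Hl Hl' H1 H2.
  rewrite <- (wprod_mul_sub a l b l' Hl H1), mulC. apply wprod_mul_sub; assumption.
Qed.

Lemma sle_letter_wprod a b l : incl (b :: l) [a] -> sle (f a) (wprod f b l).
Proof.
  intros Hall. destruct (Hall b (or_introl eq_refl)) as [<-|[]].
  destruct l as [|c l]; [apply sle_refl|].
  rewrite <- (wprod_content a [a] a (c :: l)); try congruence.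
  - apply sle_sq.
  - intros y Hy. destruct (Hall y Hy) as [<-|[]]. left; reflexivity.
  - intros y [<-|[<-|[]]]; left; reflexivity.
Qed.

Section Covering.
Variables (s : A) (C : list X).

Definition covered (w : word X) : Prop := incl (letters w) C /\ sle (wval f w) s.

Lemma covered_wcat p w : covered p -> covered w -> snd w <> [] -> covered (wcat p w).
Proof.
  destruct w as [b [|c l]]; intros [Cp Hp] [Cw Hw] Hl; [now contradiction Hl|]. split.
  - rewrite letters_wcat. apply (incl_app Cp Cw).
  - rewrite wval_wcat. apply sle_mul_prod; assumption.
Qed.

Lemma covered_long_words :
  (exists w, snd w <> [] /\ covered w) ->
  (forall x, In x C -> exists p, In x (letters p) /\ covered p) ->
  forall u, incl u C -> exists w, snd w <> [] /\ covered w /\ incl u (letters w).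
Proof.
  intros [w0 [Hl0 Hw0]] Hletter. induction u as [|x u IH]; intros Hu.
  - exists w0. split; [exact Hl0 | split; [exact Hw0 | apply incl_nil_l]].
  - apply incl_cons_inv in Hu as [Hx Hu].
    destruct (IH Hu) as [w [Hl [Hw Hincl]]].
    destruct (Hletter x Hx) as [p [Hxp Hp]].
    exists (wcat p w). split; [|split].
    + simpl. intros E. apply app_eq_nil in E as [_ E]. discriminate.
    + apply covered_wcat; assumption.
    + rewrite letters_wcat.
      apply incl_cons; [apply in_or_app; left; exact Hxp | apply incl_appr, Hincl].
Qed.

End Covering.

Lemma sle_wval_of_covered s q :
  snd q <> [] ->
  (exists w, snd w <> [] /\ covered s (letters q) w) ->
  (forall x, In x (letters q) -> exists p, In x (letters p) /\ covered s (letters q) p) ->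
  sle (wval f q) s.
Proof.
  intros Hq Hlong Hletter.
  destruct (covered_long_words s (letters q) Hlong Hletter (letters q) (incl_refl _))
    as [w [Hw [[Hwq Hws] Hqw]]].
  destruct q as [a l], w as [b l']. unfold wval in *; simpl in *.
  rewrite (wprod_content a l b l'); assumption.
Qed.

End SigmaConsequences.

Section S4Words.
Context {X : Type} (v : X -> S4_431).

Lemma wprod_S4_e2 a l y : In y (a :: l) -> v y = e2 -> wprod v a l = e2.
Proof.
  revert a. induction l as [|b l IH]; intros a Hy Hv; simpl in *.
  - destruct Hy as [<-|[]]; exact Hv.
  - destruct Hy as [<-|Hy]; [rewrite Hv; reflexivity|].
    rewrite (IH b Hy Hv). destruct (v a); reflexivity.
Qed.

Lemma wprod_S4_e4 a l : (forall y, In y (a :: l) -> v y = e4) -> wprod v a l = e4.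
Proof.
  revert a. induction l as [|b l IH]; intros a H; simpl.
  - apply H; left; reflexivity.
  - rewrite IH, (H a (or_introl eq_refl)); [reflexivity|].
    intros y Hy; apply H; right; exact Hy.
Qed.

Lemma wprod_S4_neq_e2 a l :
  (forall y, In y (a :: l) -> v y = e3 \/ v y = e4) -> wprod v a l <> e2.
Proof.
  revert a. induction l as [|b l IH]; intros a H; simpl.
  - destruct (H a (or_introl eq_refl)) as [-> | ->]; discriminate.
  - assert (Hb := IH b (fun y Hy => H y (or_intror Hy))).
    destruct (H a (or_introl eq_refl)) as [-> | ->];
      destruct (wprod v b l); simpl; congruence.
Qed.

Lemma wprod_S4_e1 a l :
  l <> [] -> (forall y, In y (a :: l) -> v y = e3 \/ v y = e4) ->
  (exists y, In y (a :: l) /\ v y = e3) -> wprod v a l = e1.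
Proof.
  revert a. induction l as [|b l IH]; intros a Hl H [y [Hy Hy3]]; [congruence|]. simpl.
  assert (Hb := wprod_S4_neq_e2 b l (fun y Hy => H y (or_intror Hy))).
  destruct (H a (or_introl eq_refl)) as [Ha|Ha]; rewrite Ha.
  - destruct (wprod v b l); simpl; congruence.
  - destruct Hy as [<-|Hy]; [congruence|].
    destruct l as [|c l].
    + destruct Hy as [<-|[]]. simpl. rewrite Hy3; reflexivity.
    + rewrite (IH b); [reflexivity|congruence| |exists y; split; assumption].
      intros z Hz; apply H; right; exact Hz.
Qed.

End S4Words.

Section S4Tests.
Context {X : Type}.
Implicit Types (t : term X) (w q : word X).

(* [e2] is a zero of S4_431, so a word with a letter outside [C] evaluates to [e2]. *)
Definition supported (C : list X) (g : X -> S4_431) (y : X) : S4_431 :=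
  if excluded_middle_informative (In y C) then g y else e2.

Lemma supported_in C g y : In y C -> supported C g y = g y.
Proof. unfold supported; intros Hy. destruct excluded_middle_informative; tauto. Qed.

Lemma ev_supported_closed t C g (Q : S4_431 -> Prop) :
  (forall x y, Q x -> Q y -> Q (add4 x y)) -> Q e2 ->
  (forall w, In w (monomials t) -> incl (letters w) C -> Q (wval (supported C g) w)) ->
  Q (ev (supported C g) t).
Proof.
  intros HQ Q2 Hin. apply ev_closed; [exact HQ|]. intros w Hw.
  destruct (classic (incl (letters w) C)) as [Hincl|Hout]; [apply Hin; assumption|].
  apply not_all_ex_not in Hout as [y Hy]. apply imply_to_and in Hy as [Hy HyC].
  unfold wval. rewrite (wprod_S4_e2 _ (fst w) (snd w) y Hy); [exact Q2|].
  unfold supported. destruct excluded_middle_informative; tauto.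
Qed.

Lemma S4_431_le_ev_letter t a :
  (forall v : X -> S4_431, sle (v a) (ev v t)) ->
  exists w, In w (monomials t) /\ incl (letters w) [a].
Proof.
  intros H. apply NNPP; intros Hno.
  set (v := supported [a] (fun _ => e4)).
  assert (Hvt : ev v t = e2).
  { apply (ev_supported_closed t [a] _ (fun x => x = e2));
      [intros x y -> ->; reflexivity | reflexivity |].
    intros w Hw Hincl. exfalso. apply Hno. exists w; split; assumption. }
  specialize (H v). rewrite Hvt in H. unfold v in H.
  rewrite supported_in in H; [discriminate | left; reflexivity].
Qed.

Lemma S4_431_le_ev_long t q :
  snd q <> [] -> (forall v : X -> S4_431, sle (wval v q) (ev v t)) ->
  exists w, In w (monomials t) /\ snd w <> [] /\ incl (letters w) (letters q).
Proof.
  intros Hq H. apply NNPP; intros Hno.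
  set (v := supported (letters q) (fun _ => e3)).
  assert (Hvq : wval v q = e1).
  { apply wprod_S4_e1; [exact Hq | |].
    - intros y Hy. left. unfold v. rewrite supported_in; [reflexivity | exact Hy].
    - exists (fst q). split; [left; reflexivity|].
      unfold v. rewrite supported_in; [reflexivity | left; reflexivity]. }
  assert (Hvt : ev v t = e2 \/ ev v t = e3).
  { apply ev_supported_closed;
      [intros x y [-> | ->] [-> | ->]; simpl; auto | left; reflexivity |].
    intros [b [|c l]] Hw Hincl.
    - right. unfold v, wval; simpl.
      rewrite supported_in; [reflexivity | apply Hincl; left; reflexivity].
    - exfalso. apply Hno. exists (b, c :: l).
      split; [exact Hw | split; [discriminate | exact Hincl]]. }
  specialize (H v). rewrite Hvq in H. destruct Hvt as [E|E]; rewrite E in H; discriminate.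
Qed.

Lemma S4_431_le_ev_occurrence t q x :
  snd q <> [] -> (forall v : X -> S4_431, sle (wval v q) (ev v t)) -> In x (letters q) ->
  exists w, In w (monomials t) /\ In x (letters w) /\ incl (letters w) (letters q).
Proof.
  intros Hq H Hx. apply NNPP; intros Hno.
  set (g := fun y => if excluded_middle_informative (y = x) then e3 else e4).
  set (v := supported (letters q) g).
  assert (Hvq : wval v q = e1).
  { apply wprod_S4_e1; [exact Hq | |].
    - intros y Hy. unfold v. rewrite supported_in; [|exact Hy].
      unfold g. destruct excluded_middle_informative; auto.
    - exists x. split; [exact Hx|]. unfold v. rewrite supported_in; [|exact Hx].
      unfold g. destruct excluded_middle_informative; congruence. }
  assert (Hvt : ev v t = e2 \/ ev v t = e4).
  { apply ev_supported_closed;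
      [intros x' y [-> | ->] [-> | ->]; simpl; auto | left; reflexivity |].
    intros w Hw Hincl. right. apply wprod_S4_e4. intros y Hy.
    unfold v. rewrite supported_in; [|apply Hincl, Hy].
    unfold g. destruct excluded_middle_informative as [->|]; [|reflexivity].
    exfalso. apply Hno. exists w. split; [exact Hw | split; assumption]. }
  specialize (H v). rewrite Hvq in H. destruct Hvt as [E|E]; rewrite E in H; discriminate.
Qed.

End S4Tests.

Section S4Identities.
Context {A : aiSemiring} (HS : satisfies_Sigma A) {X : Type}.

Lemma sle_wval_of_S4_431 (f : X -> A) q t :
  (forall v : X -> S4_431, sle (wval v q) (ev v t)) -> sle (wval f q) (ev f t).
Proof.
  intros H. destruct q as [a [|c l]].
  - destruct (S4_431_le_ev_letter t a H) as [[b l] [Hw Hincl]].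
    apply (sle_trans _ (wval f (b, l))); [exact (sle_letter_wprod HS f a b l Hincl)|].
    apply wval_le_ev, Hw.
  - assert (Hq : snd (a, c :: l) <> []) by discriminate.
    apply (sle_wval_of_covered HS); [exact Hq | |].
    + destruct (S4_431_le_ev_long t _ Hq H) as [w [Hw [Hl Hincl]]].
      exists w. split; [exact Hl | split; [exact Hincl | apply wval_le_ev, Hw]].
    + intros x Hx.
      destruct (S4_431_le_ev_occurrence t _ x Hq H Hx) as [w [Hw [Hxw Hincl]]].
      exists w. split; [exact Hxw | split; [exact Hincl | apply wval_le_ev, Hw]].
Qed.

Lemma S4_431_identities_hold (t1 t2 : term X) :
  (forall v : X -> S4_431, ev v t1 = ev v t2) -> forall f : X -> A, ev f t1 = ev f t2.
Proof.
  intros E f.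
  assert (Hle : forall s1 s2 : term X,
             (forall v : X -> S4_431, ev v s1 = ev v s2) -> sle (ev f s1) (ev f s2)).
  { intros s1 s2 Es. apply ev_le_of_monomials. intros w Hw.
    apply sle_wval_of_S4_431. intros v. rewrite <- Es. apply wval_le_ev, Hw. }
  apply sle_antisym; apply Hle; [exact E | intros v; symmetry; apply E].
Qed.

End S4Identities.

Lemma S4_431_satisfies_Sigma : satisfies_Sigma S4_431.
Proof.
  repeat split; simpl; intros; repeat match goal with x : el4 |- _ => destruct x end; reflexivity.
Qed.

Lemma satisfies_Sigma_in_variety_gen (S A : aiSemiring) :
  satisfies_Sigma S -> in_variety_gen S A -> satisfies_Sigma A.
Proof.
  intros [S1 [S2 [S3 S4]]] [I [P [h [[Pa Pm] [Hadd [Hmul Hsurj]]]]]].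
  set (pm := fun u w : {u : I -> S | P u} =>
         exist P (fun i => smul (proj1_sig u i) (proj1_sig w i))
           (Pm _ _ (proj2_sig u) (proj2_sig w))).
  set (pa := fun u w : {u : I -> S | P u} =>
         exist P (fun i => sadd (proj1_sig u i) (proj1_sig w i))
           (Pa _ _ (proj2_sig u) (proj2_sig w))).
  assert (HM : forall u w, h (pm u w) = smul (h u) (h w)) by (intros; apply Hmul; reflexivity).
  assert (HA : forall u w, h (pa u w) = sadd (h u) (h w)) by (intros; apply Hadd; reflexivity).
  repeat split.
  - intros x y. destruct (Hsurj x) as [u <-], (Hsurj y) as [w <-].
    rewrite <- (HM u w), <- (HM u u). symmetry. apply Hmul. intros i. symmetry. apply S1.
  - intros x y. destruct (Hsurj x) as [u <-], (Hsurj y) as [w <-].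
    rewrite <- (HM u w). apply Hmul. intros i. apply S2.
  - intros x. destruct (Hsurj x) as [u <-].
    rewrite <- (HM u u). apply Hadd. intros i. apply S3.
  - intros x y z. destruct (Hsurj x) as [u <-], (Hsurj y) as [w <-], (Hsurj z) as [r <-].
    rewrite <- (HM w r), <- (HA u (pm w r)), <- (HM u w), <- (HM (pm u w) r).
    apply Hadd. intros i. apply S4.
Qed.

(* The subalgebra of S^(A -> S) of term functions, mapped onto A by evaluating a
   representing term at the identity valuation; the hypothesis makes this well defined. *)
Lemma in_variety_gen_of_identities (S A : aiSemiring) :
  (forall t1 t2 : term A,
      (forall v : A -> S, ev v t1 = ev v t2) -> ev (fun x => x) t1 = ev (fun x => x) t2) ->
  in_variety_gen S A.
Proof.
  intros Hid.
  set (P := fun u : (A -> S) -> S => exists t : term A, forall v, u v = ev v t).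
  set (rep := fun w : {u | P u} => proj1_sig (constructive_indefinite_description _ (proj2_sig w))).
  assert (Hrep : forall w v, proj1_sig w v = ev v (rep w)).
  { intros w. unfold rep. destruct constructive_indefinite_description as [t Ht]. exact Ht. }
  set (h := fun w => ev (fun x : A => x) (rep w)).
  assert (Hh : forall w t, (forall v, proj1_sig w v = ev v t) -> h w = ev (fun x => x) t).
  { intros w t Ht. apply Hid. intros v. rewrite <- Hrep. apply Ht. }
  exists (A -> S), P, h. split; [split|split; [|split]].
  - intros u w [t1 H1] [t2 H2]. exists (Add t1 t2). intros v; simpl. rewrite H1, H2; reflexivity.
  - intros u w [t1 H1] [t2 H2]. exists (Mul t1 t2). intros v; simpl. rewrite H1, H2; reflexivity.
  - intros u w z Hz. apply (Hh z (Add (rep u) (rep w))).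
    intros v; simpl. rewrite <- !Hrep. apply Hz.
  - intros u w z Hz. apply (Hh z (Mul (rep u) (rep w))).
    intros v; simpl. rewrite <- !Hrep. apply Hz.
  - intros a. assert (Pa : P (fun v => v a)) by (exists (Var a); reflexivity).
    exists (exist P _ Pa). apply (Hh _ (Var a)). reflexivity.
Qed.

Theorem proposition7p4 :
  forall A : aiSemiring, in_variety_gen S4_431 A <-> satisfies_Sigma A.
Proof.
  intros A. split.
  - apply satisfies_Sigma_in_variety_gen, S4_431_satisfies_Sigma.
  - intros HS. apply in_variety_gen_of_identities.
    intros t1 t2 E. apply (S4_431_identities_hold HS t1 t2 E).
Qed.
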